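(* Let $R$ be an almost Dedekind domain and let $I$ be a nonzero integral ideal of $R$. The following are equivalent: (i) $\nu_I$ is continuous on $\mathcal{M}$; (ii) $I=J_1\cdots J_k$ for some continuous radical ideals $J_1\subseteq\cdots\subseteq J_k$; (iii) $I=J_1\cdots J_k$ for some continuous radical ideals $J_1,\ldots,J_k$.
   Context: $R$ almost Dedekind: $R_M$ is a DVR with valuation $v_M$ for every maximal $M$. $\mathcal{M}$ is $\mathrm{Max}(R)$ with the inverse topology (restriction of the coarsest topology on $\mathrm{Spec}(R)$ in which every Zariski-open Zariski-compact set is closed). For a nonzero fractional ideal $I$, $\nu_I:\mathcal{M}\to\mathbb{Z}$, $\nu_I(M)=\inf\{v_M(i)\mid i\in I\setminus\{0\}\}$; $\mathbb{Z}$ has the discrete topology; an ideal $J$ is continuous if $\nu_J$ is continuous. *)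

From mathcomp Require Import all_boot all_order all_algebra fraction.
From Stdlib Require Import ClassicalEpsilon.
Set Implicit Arguments. Unset Strict Implicit. Unset Printing Implicit Defensive.
Import Order.TTheory GRing.Theory Num.Theory.
Local Open Scope ring_scope.

Section AlmostDedekind.
Variable R : idomainType.

Local Notation K := {fraction R}.
Local Notation "x %:F" := (@FracField.tofrac R x).

Definition incl (A B : R -> Prop) := forall x, A x -> B x.

Definition is_ideal (I : R -> Prop) :=
  [/\ I 0, (forall x y, I x -> I y -> I (x + y)) & (forall r x, I x -> I (r * x))].

Definition nonzero_ideal (I : R -> Prop) := is_ideal I /\ exists x, I x /\ x != 0.

Definition prime_ideal (P : R -> Prop) :=
  [/\ is_ideal P, ~ P 1 & forall a b, P (a * b) -> P a \/ P b].

Definition maximal_ideal (M : R -> Prop) :=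
  [/\ is_ideal M, ~ M 1 &
      forall J, is_ideal J -> incl M J -> (forall x, J x <-> M x) \/ (forall x, J x)].

Definition radical_ideal (J : R -> Prop) :=
  is_ideal J /\ forall x n, J (x ^+ n.+1) -> J x.

Definition ideal_mul (I J : R -> Prop) : R -> Prop :=
  fun x => exists s : seq (R * R),
    (forall p, p \in s -> I p.1 /\ J p.2) /\ x = \sum_(p <- s) (p.1 * p.2).

Definition ideal_prod (Js : seq (R -> Prop)) : R -> Prop :=
  foldr ideal_mul (fun _ => True) Js.

Definition localization (M : R -> Prop) : K -> Prop :=
  fun z => exists a s : R, ~ M s /\ z = a%:F / s%:F.

(** Normalized discrete valuation K^* ->> Z (values at 0 are irrelevant). *)
Definition discrete_valuation (v : K -> int) :=
  [/\ (forall x y, x != 0 -> y != 0 -> v (x * y) = v x + v y),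
      (forall x y, x != 0 -> y != 0 -> x + y != 0 -> Num.min (v x) (v y) <= v (x + y))
    & (forall n : int, exists x, x != 0 /\ v x = n)].

(** R_M is a DVR whose (normalized) valuation is v. *)
Definition DVR_valuation (M : R -> Prop) (v : K -> int) :=
  discrete_valuation v /\
  forall z, localization M z <-> (z = 0 \/ 0 <= v z).

Definition almost_dedekind :=
  forall M, maximal_ideal M -> exists v, DVR_valuation M v.

(** v_M : the valuation of R_M (unique; selected by choice). *)
Definition vM (M : R -> Prop) : K -> int :=
  epsilon (inhabits (fun _ => 0)) (DVR_valuation M).

Definition is_inf_val (I : R -> Prop) (M : R -> Prop) (n : int) :=
  (exists i, I i /\ i != 0 /\ vM M i%:F = n) /\
  (forall i, I i -> i != 0 -> n <= vM M i%:F).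

Definition nu (I : R -> Prop) (M : R -> Prop) : int :=
  epsilon (inhabits 0) (is_inf_val I M).

Definition Spec : (R -> Prop) -> Prop := prime_ideal.

Definition zariski_open (U : (R -> Prop) -> Prop) :=
  exists A : R -> Prop, forall P, U P <-> (Spec P /\ ~ incl A P).

Definition zariski_compact (U : (R -> Prop) -> Prop) :=
  forall F : ((R -> Prop) -> Prop) -> Prop,
    (forall V, F V -> zariski_open V) ->
    (forall P, U P -> exists V, F V /\ V P) ->
    exists s : seq ((R -> Prop) -> Prop),
      (forall V, List.In V s -> F V) /\
      (forall P, U P -> exists V, List.In V s /\ V P).

Definition is_topology (O : ((R -> Prop) -> Prop) -> Prop) :=
  [/\ (forall U, O U -> forall P, U P -> Spec P),
      O (fun _ => False), O Spec,
      (forall U V, O U -> O V -> O (fun P => U P /\ V P))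
    & (forall F : ((R -> Prop) -> Prop) -> Prop, (forall U, F U -> O U) ->
         O (fun P => exists U, F U /\ U P))].

(** Inverse topology: the coarsest topology on Spec in which every
    Zariski-open Zariski-compact set is closed. *)
Definition inverse_open (U : (R -> Prop) -> Prop) :=
  forall O, is_topology O ->
    (forall C, zariski_open C -> zariski_compact C ->
       O (fun P => Spec P /\ ~ C P)) ->
    O U.

(** Open sets of the subspace Max(R) (= \mathcal{M}) of Spec with the inverse topology. *)
Definition max_open (V : (R -> Prop) -> Prop) :=
  exists U, inverse_open U /\ forall M, V M <-> (maximal_ideal M /\ U M).

(** nu_J : M -> Z continuous, Z discrete: every fibre is open. *)
Definition nu_continuous (J : R -> Prop) :=
  forall n : int, max_open (fun M => maximal_ideal M /\ nu J M = n).

(** Continuous ideal (nu_J is only defined for nonzero J). *)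
Definition continuous_ideal (J : R -> Prop) := nonzero_ideal J /\ nu_continuous J.

End AlmostDedekind.

(* Fix 0 <> x in I; then nu_I(M) > 0 forces x in M.  Inverse-open sets are unions
   of sets V(F) with F finite, so continuity of nu_I makes it constant on some
   V(F) around each maximal M.  In the DVR R_M every element of M has a power in
   x R_M, so V(F) contains V(x) ∩ D(t) for some t outside M; the sets D(t) cover
   the quasi-compact space Max R, hence nu_I is bounded, say by N.  The radical
   ideals J_i = the intersection of the maximal M with nu_I(M) > i satisfy
   nu_{J_i} = [nu_I > i] (a uniformizer of R_M, multiplied by a suitable t, lies
   in J_i), which is continuous; as nu turns products into sums,
   nu_{J_0 ... J_N} = nu_I, and an ideal is determined by its nu.  Conversely nu of
   a product of continuous ideals is a finite sum of continuous functions. *)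

From mathcomp Require Import all_boot all_order all_algebra fraction.
From mathcomp Require Import boolp classical_sets zify.
From Stdlib Require Import ClassicalEpsilon.
Set Implicit Arguments. Unset Strict Implicit. Unset Printing Implicit Defensive.
Import Order.TTheory GRing.Theory Num.Theory.
Local Open Scope ring_scope.

Section Ideals.
Variable R : idomainType.
Implicit Types (A B C J M P : R -> Prop) (r x y : R).

Lemma ideal0 A : is_ideal A -> A 0.
Proof. by case. Qed.

Lemma idealD A x y : is_ideal A -> A x -> A y -> A (x + y).
Proof. by case=> _ + _; apply. Qed.

Lemma idealMl A r x : is_ideal A -> A x -> A (r * x).
Proof. by case=> _ _; apply. Qed.

Lemma idealMr A r x : is_ideal A -> A x -> A (x * r).
Proof. by rewrite mulrC; apply: idealMl. Qed.

Lemma ideal_full A : is_ideal A -> A 1 -> forall x, A x.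
Proof. by move=> hA A1 x; rewrite -[x]mulr1; apply: idealMl. Qed.

Lemma proper_ideal_sub_maximal C : is_ideal C -> ~ C 1 ->
  exists2 M, maximal_ideal M & incl C M.
Proof.
move=> hC nC1.
(* set0 is admitted so that the union of the empty chain stays in P. *)
pose P (J : set R) := J = set0 \/ [/\ is_ideal J, ~ J 1 & incl C J].
have chainP (F : set (set R)) : (F `<=` P)%classic -> total_on F subset ->
    P (\bigcup_(J in F) J)%classic.
  move=> FP Ftot.
  have memF X y : F X -> X y -> [/\ is_ideal X, ~ X 1 & incl C X].
    by move=> FX Xy; case: (FP X FX) => // X0; rewrite X0 in Xy.
  have [[J0 FJ0 J00]|none] := pselect (exists2 J, F J & J 0); last first.
    left; apply/funext => y; apply/propext; split=> // -[X FX Xy].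
    by apply: none; exists X => //; case: (memF X y FX Xy) => /ideal0.
  have [_ _ CJ0] := memF J0 0 FJ0 J00.
  right; split; last by move=> y /CJ0; exists J0.
  - split; first by exists J0.
    + move=> y z [X FX Xy] [Y FY Yz].
      have [[hX _ _] [hY _ _]] := (memF X y FX Xy, memF Y z FY Yz).
      have [XY|YX] := Ftot X Y FX FY.
        by exists Y => //; apply: idealD hY (XY y Xy) Yz.
      by exists X => //; apply: idealD hX Xy (YX z Yz).
    + move=> r y [X FX Xy]; have [hX _ _] := memF X y FX Xy.
      by exists X => //; apply: idealMl.
  - by move=> [X FX X1]; case: (memF X 1 FX X1).
have [A [[A0|[hA nA1 CA]] Amax]] := Zorn_bigcup chainP.
  exfalso; apply: (Amax C); last by right; split.
  by rewrite A0; split=> // /(_ 0 (ideal0 hC)).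
exists A => //; split=> // J hJ AJ.
have [J1|nJ1] := pselect (J 1); first by right; apply: ideal_full.
left=> y; split=> [Jy|/AJ //]; apply: contrapT => nAy.
apply: (Amax J); last by right; split=> // z /CA /AJ.
by split=> // /(_ y Jy).
Qed.

Lemma maximal_ideal_prime M : maximal_ideal M -> prime_ideal M.
Proof.
case=> hM nM1 Mmax; split=> // a b Mab.
have [Ma|nMa] := pselect (M a); [by left | right].
pose J y := exists m r, M m /\ y = m + r * a.
have hJ : is_ideal J.
  split; first by exists 0, 0; rewrite mul0r addr0; split=> //; exact: ideal0 hM.
  - move=> _ _ [m1 [r1 [M1 ->]]] [m2 [r2 [M2 ->]]].
    by exists (m1 + m2), (r1 + r2); rewrite mulrDl addrACA; split=> //; apply: idealD.
  - move=> r _ [m [s [Mm ->]]].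
    by exists (r * m), (r * s); rewrite mulrDr mulrA; split=> //; apply: idealMl.
have MJ : incl M J by move=> y My; exists y, 0; rewrite mul0r addr0.
case: (Mmax J hJ MJ) => [eqJ|allJ].
  by exfalso; apply/nMa/eqJ; exists 0, 1; rewrite mul1r add0r; split=> //; exact: ideal0 hM.
have [m [r [Mm e1]]] := allJ 1.
have -> : b = m * b + r * (a * b) by rewrite mulrA -mulrDl -e1 mul1r.
by apply: (idealD hM); [apply: (idealMr _ hM) | apply: (idealMl _ hM)].
Qed.

Lemma prime_ideal_expS P x n : prime_ideal P -> P (x ^+ n.+1) -> P x.
Proof.
case=> _ _ Pmul; elim: n => [|n IH]; first by rewrite expr1.
by rewrite exprS => /Pmul [].
Qed.

Lemma ideal_mul_ideal A B : is_ideal A -> is_ideal B -> is_ideal (ideal_mul A B).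
Proof.
move=> hA hB; split.
- by exists [::]; rewrite big_nil.
- move=> _ _ [s1 [h1 ->]] [s2 [h2 ->]]; exists (s1 ++ s2); rewrite big_cat.
  by split=> // p; rewrite mem_cat => /orP [/h1|/h2].
- move=> r _ [s [hs ->]]; exists [seq (r * p.1, p.2) | p <- s]; split.
    by move=> _ /mapP [q /hs [Aq Bq] ->]; split=> //; apply: idealMl.
  by rewrite big_map mulr_sumr; apply: eq_bigr => p _; rewrite mulrA.
Qed.

Lemma ideal_mul_mul A B a b : A a -> B b -> ideal_mul A B (a * b).
Proof.
by move=> Aa Bb; exists [:: (a, b)]; rewrite big_seq1; split=> // p /[!inE] /eqP ->.
Qed.

Lemma ideal_mul_nonzero A B :
  nonzero_ideal A -> nonzero_ideal B -> nonzero_ideal (ideal_mul A B).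
Proof.
move=> [hA [a [Aa a0]]] [hB [b [Bb b0]]]; split; first exact: ideal_mul_ideal.
by exists (a * b); rewrite mulf_neq0 //; split=> //; apply: ideal_mul_mul.
Qed.

Lemma full_nonzero_ideal : nonzero_ideal (fun _ : R => True).
Proof. by split; [split | exists 1; rewrite oner_neq0]. Qed.

End Ideals.

Section Valuation.
Variable R : idomainType.
Local Notation tof := (@FracField.tofrac R).
Variables (M : R -> Prop) (v : {fraction R} -> int).
Hypotheses (hM : maximal_ideal M) (hv : DVR_valuation M v).

Let valM x y : x != 0 -> y != 0 -> v (x * y) = v x + v y.
Proof. by case: hv => -[+ _ _] _; apply. Qed.

Let val_min x y : x != 0 -> y != 0 -> x + y != 0 ->
  Num.min (v x) (v y) <= v (x + y).
Proof. by case: hv => -[_ + _] _; apply. Qed.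

Let val_surj (n : int) : exists x, x != 0 /\ v x = n.
Proof. by case: hv => -[_ _ +] _; apply. Qed.

Let val_loc z : localization M z <-> z = 0 \/ 0 <= v z.
Proof. by case: hv => _; apply. Qed.

Let hMi : is_ideal M. Proof. by case: hM. Qed.
Let nM1 : ~ M 1. Proof. by case: hM. Qed.

Lemma notin_neq0 s : ~ M s -> s != 0.
Proof. by apply: contra_notN => /eqP ->; exact: ideal0 hMi. Qed.

Lemma val1 : v 1 = 0.
Proof.
have := valM (oner_neq0 _) (oner_neq0 _); rewrite mulr1 => /(congr1 (fun t => t - v 1)).
by rewrite subrr addrK => <-.
Qed.

Lemma valV z : z != 0 -> v z^-1 = - v z.
Proof.
by move=> z0; have := valM z0 (invr_neq0 z0); rewrite mulfV // val1; lia.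
Qed.

Lemma val_tofracM a b : a != 0 -> b != 0 -> v (tof (a * b)) = v (tof a) + v (tof b).
Proof. by move=> a0 b0; rewrite tofracM valM // tofrac_eq0. Qed.

Lemma val_tofracX a n : a != 0 -> v (tof (a ^+ n)) = v (tof a) * n%:Z.
Proof.
move=> a0; elim: n => [|n IH]; first by rewrite expr0 tofrac1 val1 mulr0.
by rewrite exprS val_tofracM ?expf_neq0 // IH intS mulrDr mulr1.
Qed.

Lemma val_ge0 r : r != 0 -> 0 <= v (tof r).
Proof.
move=> r0; have /val_loc [/eqP|//] : localization M (tof r).
  by exists r, 1; rewrite tofrac1 divr1.
by rewrite tofrac_eq0 (negbTE r0).
Qed.

Lemma val_eq0 r : ~ M r -> v (tof r) = 0.
Proof.
move=> nMr; have r0 := notin_neq0 nMr.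
have r0' : tof r != 0 by rewrite tofrac_eq0.
have /val_loc [/eqP|] : localization M (tof r)^-1 by exists 1, r; rewrite tofrac1 mul1r.
  by rewrite invr_eq0 (negbTE r0').
by rewrite valV //; have := val_ge0 r0; lia.
Qed.

Lemma val_gt0 r : r != 0 -> M r -> 0 < v (tof r).
Proof.
move=> r0 Mr; rewrite lt_def; have -> /= := val_ge0 r0; rewrite andbT.
apply/eqP => vr0; have r0' : tof r != 0 by rewrite tofrac_eq0.
have [a [s [nMs e]]] : localization M (tof r)^-1.
  by apply/val_loc; right; rewrite valV // vr0.
have s0' : tof s != 0 by rewrite tofrac_eq0 notin_neq0.
move/(congr1 (fun z => z * tof s * tof r)): e.
rewrite mulrAC mulVf // mul1r divfK // -tofracM => /eqP; rewrite tofrac_eq => /eqP Es.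
by apply: nMs; rewrite Es; apply: idealMl.
Qed.

Lemma dvd_loc_of_val_le a b : a != 0 -> b != 0 -> v (tof b) <= v (tof a) ->
  exists c s, ~ M s /\ s * a = c * b.
Proof.
move=> a0 b0 vba.
have [a0' b0'] : tof a != 0 /\ tof b != 0 by rewrite !tofrac_eq0.
have [c [s [nMs e]]] : localization M (tof a / tof b).
  by apply/val_loc; right; rewrite valM ?invr_neq0 // valV //; lia.
have s0' : tof s != 0 by rewrite tofrac_eq0 notin_neq0.
move/(congr1 (fun z => z * tof b * tof s)): e.
rewrite divfK // mulrAC divfK // -!tofracM => /eqP; rewrite tofrac_eq => /eqP e.
by exists c, s; rewrite mulrC.
Qed.

Lemma val_uniformizer : exists a, [/\ a != 0, M a & v (tof a) = 1].
Proof.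
have [z [z0 vz]] := val_surj 1.
have [a [s [nMs e]]] : localization M z by apply/val_loc; right; rewrite vz.
have s0 := notin_neq0 nMs; have s0' : tof s != 0 by rewrite tofrac_eq0.
have a0 : a != 0.
  by apply: contraNneq z0 => a0; rewrite e a0 tofrac0 mul0r.
have va : v (tof a) = 1.
  have -> : tof a = z * tof s by rewrite e divfK.
  by rewrite valM // vz val_eq0 // addr0.
by exists a; split=> //; apply: contrapT => /val_eq0; rewrite va.
Qed.

Lemma val_sum_ge (T : eqType) (s : seq T) (F : T -> R) n :
  (forall t, t \in s -> F t != 0 -> n <= v (tof (F t))) ->
  \sum_(t <- s) F t != 0 -> n <= v (tof (\sum_(t <- s) F t)).
Proof.
elim: s => [|t s IH] hF; first by rewrite big_nil eqxx.
have {}IH : \sum_(u <- s) F u != 0 -> n <= v (tof (\sum_(u <- s) F u)).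
  by apply: IH => u us; apply: hF; rewrite in_cons us orbT.
have hFt := hF t (mem_head t s).
rewrite big_cons; have [->|Ft0] := eqVneq (F t) 0; first by rewrite add0r.
have [->|S0] := eqVneq (\sum_(u <- s) F u) 0; first by rewrite addr0.
move=> tS0; rewrite tofracD; apply: le_trans (val_min _ _ _); rewrite ?tofrac_eq0 //.
  by rewrite le_min hFt // IH.
by rewrite -tofracD tofrac_eq0.
Qed.

End Valuation.

Section InverseTopology.
Variable R : idomainType.
Implicit Types (U V W : (R -> Prop) -> Prop) (f : (R -> Prop) -> int).

Definition max_continuous f :=
  forall n, max_open (fun M => maximal_ideal M /\ f M = n).

Lemma max_open_ext V W : (forall M, V M <-> W M) -> max_open V -> max_open W.
Proof. by move=> VW [U [hU hV]]; exists U; split=> // M; rewrite -VW. Qed.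

Lemma max_open_setI V W : max_open V -> max_open W -> max_open (fun M => V M /\ W M).
Proof.
move=> [U1 [hU1 e1]] [U2 [hU2 e2]]; exists (fun P => U1 P /\ U2 P); split.
  by move=> O hO gen; case: (hO) => _ _ _ + _; apply; [apply: hU1 | apply: hU2].
by move=> M; rewrite e1 e2; tauto.
Qed.

Lemma max_open_bigcup (F : ((R -> Prop) -> Prop) -> Prop) :
  (forall V, F V -> max_open V) -> max_open (fun M => exists2 V, F V & V M).
Proof.
move=> hF.
pose G U := exists2 V, F V & inverse_open U /\ forall M, V M <-> maximal_ideal M /\ U M.
exists (fun P => exists U, G U /\ U P); split.
  by move=> O hO gen; case: (hO) => _ _ _ _; apply=> U [V _ [hU _]]; apply: hU.
move=> M; split=> [[V FV VM]|[hM [U [[V FV [_ e]] UM]]]]; last by exists V; rewrite // e.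
have [U [hU e]] := hF V FV; have [hM UM] := (e M).1 VM.
by split=> //; exists U; split=> //; exists V.
Qed.

Lemma max_open_set0 : max_open (fun _ : R -> Prop => False).
Proof. by exists (fun _ => False); split=> [O []|M]; last by split=> -[]. Qed.

Lemma max_open_setT : max_open (@maximal_ideal R).
Proof.
exists (@Spec R); split=> [O []//|M]; split=> [hM|[] //].
by split=> //; apply: maximal_ideal_prime.
Qed.

Lemma max_continuous_ext f g : max_continuous f ->
  (forall M, maximal_ideal M -> f M = g M) -> max_continuous g.
Proof.
by move=> hf fg n; apply: max_open_ext (hf n) => M; split=> -[hM <-]; rewrite fg.
Qed.

Lemma max_continuous_comp f (g : int -> int) :
  max_continuous f -> max_continuous (fun M => g (f M)).
Proof.
move=> hf n.
pose F V := exists2 a, g a = n & V = (fun M => maximal_ideal M /\ f M = a).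
apply: (@max_open_ext (fun M => exists2 V, F V & V M)).
  move=> M; split=> [[V [a ga ->] [hM ->]] //|[hM gfM]].
  by exists (fun Q => maximal_ideal Q /\ f Q = f M) => //; exists (f M).
by apply: max_open_bigcup => V [a _ ->].
Qed.

Lemma max_continuousD f g :
  max_continuous f -> max_continuous g -> max_continuous (fun M => f M + g M).
Proof.
move=> hf hg n.
pose F V := exists a, V = (fun M => (maximal_ideal M /\ f M = a) /\
                                    (maximal_ideal M /\ g M = n - a)).
apply: (@max_open_ext (fun M => exists2 V, F V & V M)).
  move=> M; split=> [[V [a ->] [[hM ->] [_ ->]]]|[hM fgM]]; first by rewrite addrC subrK.
  by exists (fun Q => (maximal_ideal Q /\ f Q = f M) /\ (maximal_ideal Q /\ g Q = n - f M));
    [exists (f M) | rewrite -fgM addrC addKr].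
by apply: max_open_bigcup => V [a ->]; apply: max_open_setI.
Qed.

Lemma max_continuous_cst c : max_continuous (fun _ => c).
Proof.
move=> n; have [<-|cn] := eqVneq c n.
  by apply: max_open_ext max_open_setT => M; split=> [|[]].
by apply: max_open_ext max_open_set0 => M; split=> // -[_ /eqP]; rewrite (negbTE cn).
Qed.

Definition V_finite_union W :=
  (forall P, W P -> Spec P) /\
  forall P, W P -> exists2 F : seq R, List.Forall P F &
    forall Q, Spec Q -> List.Forall Q F -> W Q.

Lemma V_finite_union_topology : is_topology V_finite_union.
Proof.
split.
- by move=> W [].
- by split.
- by split=> // P _; exists [::] => // Q.
- move=> W1 W2 [S1 h1] [S2 h2]; split=> [P [/S1] //|P [W1P W2P]].
  have [[F1 F1P F1Q] [F2 F2P F2Q]] := (h1 P W1P, h2 P W2P).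
  exists (F1 ++ F2); first by apply/List.Forall_app.
  by move=> Q SQ /List.Forall_app [FQ1 FQ2]; split; [apply: F1Q | apply: F2Q].
- move=> Fam hFam; split=> [P [W [/hFam [SW _] /SW]] //|P [W [FamW WP]]].
  have [F FP FQ] := (hFam W FamW).2 P WP.
  by exists F => // Q SQ /(FQ Q SQ) WQ; exists W.
Qed.

Lemma V_finite_union_compl_compact C : zariski_open C -> zariski_compact C ->
  V_finite_union (fun P => Spec P /\ ~ C P).
Proof.
move=> [A hA] hC.
pose D a := fun P : R -> Prop => Spec P /\ ~ P a.
pose Fam V := exists2 a, A a & V = D a.
have /choice [pick hpick] : forall V, exists a, Fam V -> A a /\ V = D a.
  by move=> V; have [[a Aa ->]|nV] := pselect (Fam V); [exists a | exists 0].
have FamO V : Fam V -> zariski_open V.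
  move=> [a _ ->]; exists (eq a) => P; split=> -[SP nP]; split=> // H; apply: nP.
    exact: H a erefl.
  by move=> _ <-.
have cov P : C P -> exists V, Fam V /\ V P.
  move=> /hA [SP nAP]; have [a Aa nPa] : exists2 a, A a & ~ P a.
    by apply: contrapT => nex; apply: nAP => a Aa; apply: contrapT => nPa; apply: nex; exists a.
  by exists (D a); split; [exists a | split].
have [s [sFam scov]] := hC Fam FamO cov.
split=> [P [] //|P [SP nCP]]; exists (map pick s).
  apply/List.Forall_map/List.Forall_forall => V /sFam /hpick [Aa _].
  by apply: contrapT => nPa; apply: nCP; apply/hA; split=> // /(_ _ Aa).
move=> Q SQ /List.Forall_map /List.Forall_forall FQ; split=> // CQ.
have [V [Vs VQ]] := scov Q CQ; have [_ eV] := hpick V (sFam V Vs).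
by move: VQ; rewrite eV => -[_]; apply; apply: FQ.
Qed.

Lemma inverse_open_V_finite_union U : inverse_open U -> V_finite_union U.
Proof.
by move=> hU; apply: hU V_finite_union_topology _ => C; apply: V_finite_union_compl_compact.
Qed.

Lemma max_continuous_locally_constant f : max_continuous f ->
  forall M, maximal_ideal M -> exists2 F : seq R, List.Forall M F &
    forall Q, maximal_ideal Q -> List.Forall Q F -> f Q = f M.
Proof.
move=> hf M hM; have [U [/inverse_open_V_finite_union [_ hU] e]] := hf (f M).
have [_ /hU [F FM FQ]] := (e M).1 (conj hM erefl).
exists F => // Q hQ /(FQ Q (maximal_ideal_prime hQ)) UQ.
by have [] := (e Q).2 (conj hQ UQ).
Qed.

End InverseTopology.

Section Nu.
Variable R : idomainType.
Hypothesis hR : almost_dedekind R.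
Local Notation tof := (@FracField.tofrac R).
Implicit Types (A B M Q : R -> Prop).

Lemma vM_DVR M : maximal_ideal M -> DVR_valuation M (vM M).
Proof. by move=> /hR [v hv]; apply: epsilon_spec; exists v. Qed.

Section AtMaximal.
Variable M : R -> Prop.
Hypothesis hM : maximal_ideal M.
Let hv := vM_DVR hM.

Lemma nu_spec A : nonzero_ideal A -> is_inf_val A M (nu A M).
Proof.
move=> [_ [a [Aa a0]]]; apply: epsilon_spec.
pose P n := `[< exists2 b, A b /\ b != 0 & vM M (tof b) = n%:Z >].
have exP : exists n, P n.
  exists `|vM M (tof a)|%N; apply/asboolP; exists a => //.
  by rewrite gez0_abs // (val_ge0 hM hv a0).
case: (ex_minnP exP) => m /asboolP [b [Ab b0] vb] mmin.
exists m%:Z; split=> [|i Ai i0]; first by exists b.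
have vi := val_ge0 hM hv i0; rewrite -(gez0_abs vi) lez_nat.
by apply: mmin; apply/asboolP; exists i; rewrite ?gez0_abs.
Qed.

Lemma nu_le A a : nonzero_ideal A -> A a -> a != 0 -> nu A M <= vM M (tof a).
Proof. by move=> /nu_spec [_]; apply. Qed.

Lemma nu_attained A : nonzero_ideal A ->
  exists a, [/\ A a, a != 0 & vM M (tof a) = nu A M].
Proof. by move=> /nu_spec [[a [Aa [a0 va]]] _]; exists a. Qed.

Lemma nu_ge0 A : nonzero_ideal A -> 0 <= nu A M.
Proof. by move=> /nu_attained [a [_ a0 <-]]; exact: (val_ge0 hM hv a0). Qed.

Lemma nuE A n : nonzero_ideal A ->
  (exists a, [/\ A a, a != 0 & vM M (tof a) = n]) ->
  (forall a, A a -> a != 0 -> n <= vM M (tof a)) -> nu A M = n.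
Proof.
move=> hA [a [Aa a0 <-]] lbn; apply/eqP; rewrite eq_le nu_le //=.
by have [b [Ab b0 <-]] := nu_attained hA; apply: lbn.
Qed.

Lemma nu_eq0 A s : nonzero_ideal A -> A s -> ~ M s -> nu A M = 0.
Proof.
move=> hA As nMs; apply/eqP; rewrite eq_le nu_ge0 // andbT.
by rewrite -(val_eq0 hM hv nMs) nu_le // (notin_neq0 hM nMs).
Qed.

Lemma nu_mul A B : nonzero_ideal A -> nonzero_ideal B ->
  nu (ideal_mul A B) M = nu A M + nu B M.
Proof.
move=> hA hB; apply: nuE (ideal_mul_nonzero hA hB) _ _.
  have [[a [Aa a0 va]] [b [Bb b0 vb]]] := (nu_attained hA, nu_attained hB).
  exists (a * b); rewrite mulf_neq0 // (val_tofracM hv) // va vb.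
  by split=> //; apply: ideal_mul_mul.
move=> _ [s [hs ->]] s0; apply: (val_sum_ge hv (F := fun p => p.1 * p.2)) => // p ps.
rewrite mulf_eq0 negb_or => /andP [p1 p2]; have [Ap Bp] := hs p ps.
by rewrite (val_tofracM hv) // lerD // nu_le.
Qed.

Lemma nu_full : nu (fun _ => True) M = 0.
Proof. by case: hM => _ nM1 _; exact: (nu_eq0 (full_nonzero_ideal R) Logic.I nM1). Qed.

End AtMaximal.

Lemma nu_prod (T : eqType) (J : T -> R -> Prop) (s : seq T) :
  {in s, forall i, nonzero_ideal (J i)} ->
  nonzero_ideal (ideal_prod [seq J i | i <- s]) /\
  forall M, maximal_ideal M ->
    nu (ideal_prod [seq J i | i <- s]) M = \sum_(i <- s) nu (J i) M.
Proof.
elim: s => [|i s IH] hJ.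
  by split=> [|M hM]; rewrite ?big_nil ?nu_full //; exact: full_nonzero_ideal.
have hJs : {in s, forall j, nonzero_ideal (J j)}.
  by move=> j js; apply: hJ; rewrite inE js orbT.
have [hP nuP] := IH hJs.
have hJi := hJ i (mem_head i s).
by split=> [|M hM]; rewrite /= ?big_cons ?nu_mul ?nuP //; apply: ideal_mul_nonzero.
Qed.

Lemma nu_prod_continuous (T : eqType) (J : T -> R -> Prop) (s : seq T) :
  {in s, forall i, continuous_ideal (J i)} ->
  nu_continuous (ideal_prod [seq J i | i <- s]).
Proof.
elim: s => [|i s IH] hJ.
  by apply: (@max_continuous_ext _ _ (nu _) (max_continuous_cst R 0)) => M hM; rewrite nu_full.
have hJs j : j \in s -> continuous_ideal (J j) by move=> js; apply: hJ; rewrite inE js orbT.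
have [[hJi cJi] [hP _]] := (hJ i (mem_head i s), nu_prod (fun j js => (hJs j js).1)).
apply: (@max_continuous_ext _ _ (nu _) (max_continuousD cJi (IH hJs))) => M hM.
by rewrite /= nu_mul.
Qed.

Lemma incl_of_nu_le A B : nonzero_ideal A -> nonzero_ideal B ->
  (forall M, maximal_ideal M -> nu B M <= nu A M) -> incl A B.
Proof.
move=> hA hB hBA r Ar; have hBi := hB.1.
have [->|r0] := eqVneq r 0; first exact: ideal0.
pose C s := B (s * r).
have hC : is_ideal C.
  split; rewrite /C ?mul0r; first exact: ideal0.
    by move=> x y; rewrite mulrDl; apply: idealD.
  by move=> t x; rewrite -mulrA; apply: idealMl.
have [C1|nC1] := pselect (C 1); first by rewrite /C mul1r in C1.
have [M hM CM] := proper_ideal_sub_maximal hC nC1.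
have [b [Bb b0 vb]] := nu_attained hM hB.
have : vM M (tof b) <= vM M (tof r) by rewrite vb (le_trans (hBA M hM)) ?nu_le.
case/(dvd_loc_of_val_le hM (vM_DVR hM) r0 b0) => c [s [nMs e]].
by case: nMs; apply: CM; rewrite /C e; apply: idealMl.
Qed.

End Nu.

Lemma leq_sum_In (T : Type) (f : T -> nat) (s : seq T) t :
  List.In t s -> (f t <= \sum_(u <- s) f u)%N.
Proof.
elim: s => //= u s IH; rewrite big_cons => -[<-|/IH]; first exact: leq_addr.
by move/leq_trans; apply; apply: leq_addl.
Qed.

Lemma sum_iota_lt (k m : nat) :
  \sum_(i <- iota 0 k) (if i%:Z < m%:Z then 1 else 0 : int) = (minn k m)%:Z.
Proof.
elim: k => [|k IH]; first by rewrite big_nil min0n.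
rewrite -addn1 iotaD big_cat /= big_cons big_nil add0n addr0 IH ltz_nat addn1.
case: ltnP => km; last by rewrite addr0 (minn_idPr (leqW km)).
by rewrite (minn_idPl km) -addn1 PoszD.
Qed.

Section Level.
Variable R : idomainType.
Hypothesis hR : almost_dedekind R.
Local Notation tof := (@FracField.tofrac R).
Implicit Types (M Q : R -> Prop).

Lemma V_cap_D_sub_V1 M x a : maximal_ideal M -> x != 0 -> M a ->
  exists2 t, ~ M t & forall Q, prime_ideal Q -> Q x -> ~ Q t -> Q a.
Proof.
move=> hM x0 Ma; have hv := vM_DVR hR hM.
have [->|a0] := eqVneq a 0.
  by exists 1 => [|Q [hQ _ _] _ _]; [case: hM | exact: ideal0].
set n := `|vM M (tof x)|%N.
have : vM M (tof x) <= vM M (tof (a ^+ n.+1)).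
  rewrite (val_tofracX hv) // /n.
  have := val_gt0 hM hv a0 Ma; have := val_ge0 hM hv x0; nia.
case/(dvd_loc_of_val_le hM hv (expf_neq0 _ a0) x0) => c [t [nMt e]].
exists t => // Q hQ Qx nQt; have [hQi _ Qmul] := hQ.
have /Qmul [//|/(prime_ideal_expS hQ) //] : Q (t * a ^+ n.+1).
by rewrite e; apply: idealMl.
Qed.

Lemma V_cap_D_sub_V M x (F : seq R) : maximal_ideal M -> x != 0 -> List.Forall M F ->
  exists2 t, ~ M t & forall Q, prime_ideal Q -> Q x -> ~ Q t -> List.Forall Q F.
Proof.
move=> hM x0; elim: F => [_|a F IH /List.Forall_cons_iff [Ma /IH [t2 nMt2 ht2]]].
  by exists 1 => [|Q _ _ _ //]; case: hM.
have [t1 nMt1 ht1] := V_cap_D_sub_V1 hM x0 Ma.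
exists (t1 * t2); first by have [_ _ Mmul] := maximal_ideal_prime hM; case/Mmul.
move=> Q hQ Qx nQt; have [hQi _ _] := hQ.
by constructor; [apply: ht1 | apply: ht2] => // Qt; apply: nQt;
  [apply: idealMr | apply: idealMl].
Qed.

Lemma maximal_finite_subcover (s : (R -> Prop) -> R) :
  (forall M, maximal_ideal M -> ~ M (s M)) ->
  exists Ms : seq (R -> Prop), (forall M, List.In M Ms -> maximal_ideal M) /\
    forall Q, maximal_ideal Q -> exists2 M, List.In M Ms & ~ Q (s M).
Proof.
move=> hs.
(* L is an ideal that no maximal M can contain, since s M lies in L. *)
pose L r := exists2 Ms : seq (R -> Prop), (forall M, List.In M Ms -> maximal_ideal M) &
  forall Q, maximal_ideal Q -> (forall M, List.In M Ms -> Q (s M)) -> Q r.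
have hL : is_ideal L.
  split; first by exists [::] => // Q [hQ _ _] _; exact: ideal0.
    move=> y z [Ms1 h1 e1] [Ms2 h2 e2]; exists (Ms1 ++ Ms2).
      by move=> M /(@List.in_app_or _ Ms1 Ms2 M) [/h1|/h2].
    move=> Q hQ QMs; have [hQi _ _] := hQ.
    by apply: idealD (e1 Q hQ _) (e2 Q hQ _) => // M MMs; apply: QMs;
      apply: List.in_or_app; [left | right].
  by move=> r y [Ms h e]; exists Ms => // Q hQ /(e Q hQ); apply: idealMl; case: hQ.
have [[Ms hMs e]|nL1] := pselect (L 1); last first.
  have [M hM LM] := proper_ideal_sub_maximal hL nL1.
  exfalso; apply: (hs M hM); apply: LM.
  by exists [:: M] => [M' [<-|[]] //|Q _ QM]; apply: QM; left.
exists Ms; split=> // Q hQ; apply: contrapT => nex.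
have [_ nQ1 _] := hQ; apply: nQ1; apply: (e Q hQ) => M MMs.
by apply: contrapT => nQs; apply: nex; exists M.
Qed.

Variable I : R -> Prop.
Hypothesis hI : nonzero_ideal I.

Definition level_ideal (i : nat) : R -> Prop :=
  fun r => forall M, maximal_ideal M -> i%:Z < nu I M -> M r.

Lemma level_ideal_radical i : radical_ideal (level_ideal i).
Proof.
split; first split.
- by move=> M [hM _ _] _; exact: ideal0.
- by move=> a b ha hb M hM lt; apply: idealD (ha M hM lt) (hb M hM lt); case: hM.
- by move=> r a ha M hM lt; apply: idealMl (ha M hM lt); case: hM.
- by move=> a n h M hM lt; apply: prime_ideal_expS (maximal_ideal_prime hM) (h M hM lt).
Qed.

Lemma level_ideal_mono i : incl (level_ideal i) (level_ideal i.+1).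
Proof. by move=> r hr M hM lt; apply: hr => //; apply: lt_trans lt; rewrite ltz_nat. Qed.

Variable x : R.
Hypotheses (Ix : I x) (x0 : x != 0).

Lemma nu_pos_mem M : maximal_ideal M -> 0 < nu I M -> M x.
Proof.
move=> hM nuI; apply: contrapT => nMx.
by rewrite (nu_eq0 hR hM hI Ix nMx) in nuI.
Qed.

Lemma level_ideal_nonzero i : nonzero_ideal (level_ideal i).
Proof.
split; first exact: (level_ideal_radical i).1.
by exists x; split=> // M hM lt; apply: nu_pos_mem => //; apply: le_lt_trans lt.
Qed.

Hypothesis hc : nu_continuous I.

Lemma nu_locally_constant M : maximal_ideal M -> exists2 t, ~ M t &
  forall Q, maximal_ideal Q -> Q x -> ~ Q t -> nu I Q = nu I M.
Proof.
move=> hM; have [F FM FQ] := max_continuous_locally_constant hc hM.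
have [t nMt ht] := V_cap_D_sub_V hM x0 FM.
by exists t => // Q hQ Qx nQt; apply: FQ => //; apply: ht => //; apply: maximal_ideal_prime.
Qed.

Lemma nu_bounded : exists N : nat, forall M, maximal_ideal M -> nu I M <= N%:Z.
Proof.
have /choice [s hs] : forall M, exists t, maximal_ideal M -> ~ M t /\
    forall Q, maximal_ideal Q -> Q x -> ~ Q t -> nu I Q = nu I M.
  move=> M; have [hM|] := pselect (maximal_ideal M); last by exists 0.
  by have [t nMt ht] := nu_locally_constant hM; exists t.
have [Ms [hMs cover]] := maximal_finite_subcover (fun M hM => (hs M hM).1).
exists (\sum_(M <- Ms) `|nu I M|%N) => Q hQ.
have [Qx|nQx] := pselect (Q x); last by rewrite (nu_eq0 hR hQ hI Ix nQx).
have [M MMs nQs] := cover Q hQ; have hM := hMs M MMs.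
rewrite ((hs M hM).2 Q hQ Qx nQs) -(gez0_abs (nu_ge0 hR hM hI)) lez_nat.
exact: leq_sum_In.
Qed.

Lemma nu_level_ideal i M : maximal_ideal M ->
  nu (level_ideal i) M = if i%:Z < nu I M then 1 else 0.
Proof.
move=> hM; have hv := vM_DVR hR hM; have hL := level_ideal_nonzero i.
case: ifP => [lt|/negbT ge].
  have [a [a0 Ma va]] := val_uniformizer hM hv.
  have [t nMt ht] := V_cap_D_sub_V1 hM x0 Ma.
  have t0 := notin_neq0 hM nMt.
  apply: (nuE hR hM hL); last first.
    by move=> r Lr r0; rewrite -gtz0_ge1; exact: (val_gt0 hM hv r0 (Lr M hM lt)).
  exists (t * a); split; first 1 last.
  - by rewrite mulf_neq0.
  - by rewrite (val_tofracM hv) // va (val_eq0 hM hv nMt).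
  move=> Q hQ ltQ; have [hQi _ _] := hQ.
  have [Qt|nQt] := pselect (Q t); first exact: idealMr.
  apply: (idealMl _ hQi); apply: (ht Q (maximal_ideal_prime hQ) _ nQt).
  by apply: nu_pos_mem => //; apply: le_lt_trans ltQ.
have [t nMt ht] := nu_locally_constant hM.
apply: (nu_eq0 hR hM hL (s := t)) => // Q hQ ltQ; apply: contrapT => nQt.
have Qx : Q x by apply: nu_pos_mem => //; apply: le_lt_trans ltQ.
by move: ltQ; rewrite (ht Q hQ Qx nQt) (negbTE ge).
Qed.

Lemma level_ideal_continuous i : continuous_ideal (level_ideal i).
Proof.
split; first exact: level_ideal_nonzero.
pose g (n : int) : int := if i%:Z < n then 1 else 0.
apply: (@max_continuous_ext _ _ (nu _) (max_continuous_comp g hc)) => M hM.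
by rewrite nu_level_ideal.
Qed.

Lemma level_ideal_factorization : exists2 k, (0 < k)%N &
  forall r, I r <-> ideal_prod [seq level_ideal i | i <- iota 0 k] r.
Proof.
have [N hN] := nu_bounded; exists N.+1 => //.
have [hP nuP] := nu_prod hR (s := iota 0 N.+1) (fun i _ => level_ideal_nonzero i).
have nuPE M : maximal_ideal M -> nu (ideal_prod [seq level_ideal i | i <- iota 0 N.+1]) M = nu I M.
  move=> hM; have nu0 := nu_ge0 hR hM hI.
  rewrite nuP // (eq_bigr _ (fun i _ => nu_level_ideal i hM)) -(gez0_abs nu0).
  rewrite sum_iota_lt (minn_idPr _) // -lez_nat gez0_abs //.
  by apply: le_trans (hN M hM) _; rewrite lez_nat.
by move=> r; split; apply: incl_of_nu_le => // M hM; rewrite nuPE.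
Qed.

End Level.

Local Close Scope ring_scope.

Theorem proposition3p8 (R : idomainType) (hR : almost_dedekind R)
    (I : R -> Prop) (hI : nonzero_ideal I) :
  (nu_continuous I <->
     exists (k : nat) (J : nat -> R -> Prop), (0 < k)%N /\
       (forall i, (i < k)%N -> radical_ideal (J i) /\ continuous_ideal (J i)) /\
       (forall i, (i.+1 < k)%N -> incl (J i) (J i.+1)) /\
       (forall x, I x <-> ideal_prod [seq J i | i <- iota 0 k] x)) /\
  (nu_continuous I <->
     exists (k : nat) (J : nat -> R -> Prop), (0 < k)%N /\
       (forall i, (i < k)%N -> radical_ideal (J i) /\ continuous_ideal (J i)) /\
       (forall x, I x <-> ideal_prod [seq J i | i <- iota 0 k] x)).
Proof.
have [_ [x [Ix x0]]] := hI.
have factor : nu_continuous I -> exists k (J : nat -> R -> Prop), (0 < k)%N /\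
    (forall i, (i < k)%N -> radical_ideal (J i) /\ continuous_ideal (J i)) /\
    (forall i, (i.+1 < k)%N -> incl (J i) (J i.+1)) /\
    (forall x, I x <-> ideal_prod [seq J i | i <- iota 0 k] x).
  move=> hc; have [k k0 e] := level_ideal_factorization hR hI Ix x0 hc.
  exists k, (level_ideal I); split=> //; split.
    by move=> i _; split; [apply: level_ideal_radical | exact: (level_ideal_continuous hR hI Ix x0 hc)].
  by split=> // i _; apply: level_ideal_mono.
have unfactor k (J : nat -> R -> Prop) :
    (forall i, (i < k)%N -> radical_ideal (J i) /\ continuous_ideal (J i)) ->
    (forall x, I x <-> ideal_prod [seq J i | i <- iota 0 k] x) -> nu_continuous I.
  move=> hJ e; have -> : I = ideal_prod [seq J i | i <- iota 0 k].
    by apply/funext => r; apply/propext.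
  by apply: (@nu_prod_continuous _ hR _ J) => i; rewrite mem_iota => /andP [_ /hJ []].
split; split.
- exact: factor.
- by move=> [k [J [_ [hJ [_ e]]]]]; apply: unfactor hJ e.
- by move=> /factor [k [J [k0 [hJ [_ e]]]]]; exists k, J.
- by move=> [k [J [_ [hJ e]]]]; apply: unfactor hJ e.
Qed.
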